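(* Let $\mathcal{A}=(\mathcal{H},|s_0\rangle,\Sigma,\{U_\sigma\}_{\sigma\in\Sigma},F)$ be a quantum automaton. For any $w\in\Sigma^+$ and any $\varepsilon>0$, there is a positive integer $k$ such that $$f^{\mathrm{D}}_{\mathcal{A}}(uw^kv)\ge f^{\mathrm{D}}_{\mathcal{A}}(uv)-\varepsilon$$ for all $u\in\Sigma^*$ and $v\in\Sigma^\omega$. Moreover, if $\mathcal{H}$ is $n$-dimensional, there is a constant $c$ such that such a $k$ can be chosen with $k\le(c\varepsilon)^{-n}$.
   Context: A quantum automaton is a tuple $\mathcal{A}=(\mathcal{H},|s_0\rangle,\Sigma,\{U_\sigma:\sigma\in\Sigma\},F)$ where $\mathcal{H}$ is a finite-dimensional complex Hilbert space, $|s_0\rangle$ a unit vector, $\Sigma$ a finite alphabet, each $U_\sigma$ unitary, and $F$ a subspace of $\mathcal{H}$. Let $w=\sigma_1\sigma_2\cdots\in\Sigma^\omega$, let $|\psi\rangle\in F$ be a unit vector, and let $0\le n_1<n_2<\cdots$ be a strictly increasing sequence of checkpoints. The disturbing run of $\mathcal{A}$ over $w$ under the measurement $\{|\psi\rangle\langle\psi|, I-|\psi\rangle\langle\psi|\}$ with checkpoints $\{n_i\}$ is the sequence $|s_0\rangle,|s_1\rangle,\dots$ where $|s_0\rangle$ is the initial state and, for $n\ge1$, $|s_n\rangle=U_{\sigma_n}|\psi\rangle$ if $n-1=n_i$ for some $i$, and $|s_n\rangle=U_{\sigma_n}|s_{n-1}\rangle$ otherwise (i.e. after each checkpoint the state is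 reset to $|\psi\rangle$). The disturbing Büchi acceptance probability is $$f^{\mathrm{D}}_{\mathcal{A}}(w)=\sup_{|\psi\rangle\in F,\ \||\psi\rangle\|=1}\sup_{\{n_i\}}\inf_{i\ge1}|\langle\psi|s_{n_i}\rangle|^2,$$ where $|s_n\rangle$ is the disturbing run under $|\psi\rangle$ and $\{n_i\}$. *)

From HB Require Import structures.
From mathcomp Require Import all_boot all_order all_algebra.
From mathcomp Require Import complex spectral.
From mathcomp Require Import boolp classical_sets reals constructive_ereal ereal.

Set Implicit Arguments.
Unset Strict Implicit.
Unset Printing Implicit Defensive.

Import Order.TTheory GRing.Theory Num.Theory.
Local Open Scope ring_scope.
Local Open Scope classical_set_scope.
Local Open Scope sesquilinear_scope.

Record qautomaton (R : realType) (n : nat) (Sigma : finType) := QAutomaton {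
  qa_init : 'cV[R[i]]_n;
  qa_U : Sigma -> 'M[R[i]]_n;
  qa_F : 'M[R[i]]_n;                         (* F = row space of qa_F, as a subspace of C^n *)
  qa_init_unit : (qa_init^t* *m qa_init) 0 0 = 1;
  qa_U_unitary : forall s, qa_U s \is unitarymx
}.

Section QA.
Variables (R : realType) (n : nat) (Sigma : finType).

Definition braket (phi psi : 'cV[R[i]]_n) : R[i] := (phi^t* *m psi) 0 0.

Definition prob (phi psi : 'cV[R[i]]_n) : R := let z := braket phi psi in complex.Re z ^+ 2 + complex.Im z ^+ 2.

Definition in_subspace (F : 'M[R[i]]_n) (psi : 'cV[R[i]]_n) : bool :=
  (psi^T <= F)%MS.

Definition unit_vector (psi : 'cV[R[i]]_n) : Prop := braket psi psi = 1.

Definition checkpoints (ns : nat -> nat) : Prop := forall i, (ns i < ns i.+1)%N.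

(** The infinite word w is indexed from 0,
    so the letter sigma_{m+1} of the paper is [w m]. *)
Fixpoint drun (A : qautomaton R n Sigma) (w : nat -> Sigma) (psi : 'cV[R[i]]_n)
    (ns : nat -> nat) (m : nat) : 'cV[R[i]]_n :=
  match m with
  | 0 => qa_init A
  | m'.+1 => qa_U A (w m') *m
             (if `[< exists i, ns i = m' >] then psi else drun A w psi ns m')
  end.

Definition fD (A : qautomaton R n Sigma) (w : nat -> Sigma) : \bar R :=
  ereal_sup [set ereal_sup [set ereal_inf
       [set ((prob psi (drun A w psi ns (ns i)))%:E) | i in [set: nat]]
     | ns in checkpoints]
   | psi in [set psi | in_subspace (qa_F A) psi /\ unit_vector psi]].

End QA.

Definition prepend (Sigma : Type) (u : seq Sigma) (v : nat -> Sigma) : nat -> Sigma :=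
  fun i => if (i < size u)%N then nth (v 0%N) u i else v (i - size u)%N.

Definition wpow (Sigma : Type) (w : seq Sigma) (k : nat) : seq Sigma :=
  flatten (nseq k w).

From HB Require Import structures.
From mathcomp Require Import all_boot all_order all_algebra.
From mathcomp Require Import complex spectral.
From mathcomp Require Import boolp classical_sets reals constructive_ereal ereal.
From mathcomp Require Import zify lra.

(** Insert a block [w'] after the prefix [u] and delay every later checkpoint
    by [size w']: the state reached at each checkpoint changes only by the
    unitary [U_w'] inserted into its evolution (or not at all, when a reset
    happens after the block).  Hence if [U_w'] lowers every transition
    probability [|<phi|y>|^2] by at most [eps], so does every term of the
    infimum, and [f^D] drops by at most [eps].
    For [w' = w^k], write [U_w = P^* diag(d) P] with [|d_l| = 1].  Among the
    powers [d^0, ..., d^N] with [N = (8(M+1))^n] two lie in the same cell of a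
    partition of the [n]-torus into cells of diameter [2/M], so for [k = j - i]
    every [d_l^k] is within [2/M] of [1], and then [U_w^k] lowers transition
    probabilities by at most [4/M].  Taking [M ~ 4/eps] gives [k <= (48/eps)^n]. *)

Set Implicit Arguments.
Unset Strict Implicit.
Unset Printing Implicit Defensive.

Import Order.TTheory GRing.Theory Num.Theory.
Local Open Scope ring_scope.
Local Open Scope sesquilinear_scope.

Section Words.
Context {R : realType} {n : nat} {Sigma : finType} (A : qautomaton R n Sigma).

Definition matw (s : seq Sigma) : 'M[R[i]]_n :=
  foldl (fun M a => qa_U A a *m M) 1%:M s.

Lemma foldl_matw s (M : 'M[R[i]]_n) :
  foldl (fun M a => qa_U A a *m M) M s = matw s *m M.
Proof.
rewrite /matw; elim: s M => [|a s IH] M /=; first by rewrite mul1mx.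
by rewrite IH [in RHS]IH mulmx1 mulmxA.
Qed.

Lemma matw_cat s1 s2 : matw (s1 ++ s2) = matw s2 *m matw s1.
Proof. by rewrite {1}/matw foldl_cat foldl_matw. Qed.

Lemma matw_rcons s a : matw (rcons s a) = qa_U A a *m matw s.
Proof. by rewrite -cats1 matw_cat /matw /= mulmx1. Qed.

Lemma matw_unitary s : matw s \is unitarymx.
Proof.
elim/last_ind: s => [|s a IH].
  by apply/unitarymxP; rewrite /matw /= trmx1 map_mx1 mulmx1.
by rewrite matw_rcons mul_unitarymx // qa_U_unitary.
Qed.

End Words.

Section Braket.
Context {R : realType} {n : nat}.
Local Notation vec := 'cV[R[i]]_n.

Lemma unitary_trC_mul (M : 'M[R[i]]_n) : M \is unitarymx -> M^t* *m M = 1%:M.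
Proof. by move=> MU; have := mulmxKtV (1%:M : 'M_n) MU erefl; rewrite mul1mx. Qed.

Lemma braket_mulmxr (M : 'M[R[i]]_n) (phi y : vec) :
  braket phi (M *m y) = braket (M^t* *m phi) y.
Proof. by rewrite /braket [in RHS]trmx_mul [in RHS]map_mxM trmxCK mulmxA. Qed.

Lemma braket_unitary (M : 'M[R[i]]_n) (y z : vec) :
  M \is unitarymx -> braket (M *m y) (M *m z) = braket y z.
Proof. by move=> MU; rewrite braket_mulmxr mulmxA unitary_trC_mul // mul1mx. Qed.

Lemma prob_mulmxr (M : 'M[R[i]]_n) (phi y : vec) :
  prob phi (M *m y) = prob (M^t* *m phi) y.
Proof. by rewrite /prob braket_mulmxr. Qed.

Lemma prob_unitary (M : 'M[R[i]]_n) (y z : vec) :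
  M \is unitarymx -> prob (M *m y) (M *m z) = prob y z.
Proof. by move=> MU; rewrite /prob braket_unitary. Qed.

Lemma unit_vector_unitary (M : 'M[R[i]]_n) (y : vec) :
  M \is unitarymx -> unit_vector y -> unit_vector (M *m y).
Proof. by move=> MU; rewrite /unit_vector braket_unitary. Qed.

Lemma unit_vector_drun (Sigma : finType) (A : qautomaton R n Sigma) z psi ns m :
  unit_vector psi -> unit_vector (drun A z psi ns m).
Proof.
move=> psi_unit; elim: m => [|m IH] /=; first exact: qa_init_unit.
by apply: unit_vector_unitary; [exact: qa_U_unitary | case: ifP].
Qed.

Definition nearly_id (T : 'M[R[i]]_n) (eps : R) :=
  forall phi y : vec, unit_vector phi -> unit_vector y ->
    prob phi y - eps <= prob phi (T *m y).

End Braket.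

Section Insertion.
Context {R : realType} {n : nat} {Sigma : finType} (A : qautomaton R n Sigma).
Variables (u W : seq Sigma) (v : nat -> Sigma) (psi : 'cV[R[i]]_n) (ns : nat -> nat).
Hypothesis W_neq0 : W != [::].
Local Notation L := (size u).
Local Notation K := (size W).
Local Notation z := (prepend u v).
Local Notation z' := (prepend (u ++ W) v).

Definition shift_checkpoints i := if (ns i <= L)%N then ns i else (ns i + K)%N.
Local Notation ns' := shift_checkpoints.

Lemma size_W_gt0 : (0 < K)%N.
Proof. by case: W W_neq0. Qed.

Lemma prepend_insert_before i : (i < L)%N -> z' i = z i.
Proof. by move=> iL; rewrite /prepend size_cat ltn_addr // nth_cat iL. Qed.

Lemma prepend_insert_block j : (j < K)%N -> z' (L + j) = nth (v 0%N) W j.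
Proof.
move=> jK; rewrite /prepend size_cat ltn_add2l jK nth_cat ltnNge leq_addr /=.
by rewrite addKn.
Qed.

Lemma prepend_insert_after i : (L <= i)%N -> z' (i + K) = z i.
Proof. by move=> Li; rewrite /prepend size_cat ltn_add2r ltnNge Li /= subnDr. Qed.

Lemma shift_checkpoints_incr : checkpoints ns -> checkpoints ns'.
Proof. by move=> ns_incr i; have := ns_incr i; rewrite /ns'; do 2 case: ifP; lia. Qed.

Lemma shift_checkpoint_before m :
  (m <= L)%N -> (exists i, ns' i = m) <-> (exists i, ns i = m).
Proof.
by move=> mL; split=> -[i ns_i]; exists i; move: ns_i; rewrite /ns'; case: ifP; lia.
Qed.

Lemma shift_checkpoint_block m : (L < m <= L + K)%N -> ~ exists i, ns' i = m.
Proof. by move=> mLK [j]; rewrite /ns'; case: ifP; lia. Qed.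

Lemma shift_checkpoint_after m :
  (L < m)%N -> (exists i, ns' i = (m + K)%N) <-> (exists i, ns i = m).
Proof.
by move=> Lm; split=> -[i ns_i]; exists i; move: ns_i; rewrite /ns'; case: ifP; lia.
Qed.

Local Notation D := (drun A z psi ns).
Local Notation D' := (drun A z' psi ns').

Definition block_input := if `[< exists i, ns i = L >] then psi else D L.

Lemma drun_insert_before m : (m <= L)%N -> D' m = D m.
Proof.
elim: m => [//|m IH] mL /=.
rewrite prepend_insert_before // IH ?(ltnW mL) //.
by rewrite (asbool_equiv_eq (shift_checkpoint_before (ltnW mL))).
Qed.

Lemma drun_insert_block j :
  (0 < j <= K)%N -> D' (L + j) = matw A (take j W) *m block_input.
Proof.
elim: j => [//|[|j] IH] jK.
  have := prepend_insert_block size_W_gt0; rewrite addn0 addn1 /= => ->.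
  rewrite drun_insert_before // (asbool_equiv_eq (shift_checkpoint_before (leqnn L))).
  by rewrite (take_nth (v 0%N)) ?size_W_gt0 // take0 matw_rcons /matw /= mulmx1.
rewrite addnS /= prepend_insert_block // asboolF; last by apply: shift_checkpoint_block; lia.
by rewrite IH ?(take_nth (v 0%N) jK) ?matw_rcons ?mulmxA //; lia.
Qed.

Lemma drun_insert_after m : (L < m)%N ->
  D' (m + K) = D m \/
  exists2 V, V \is unitarymx &
    D m = V *m block_input /\ D' (m + K) = V *m (matw A W *m block_input).
Proof.
elim: m => [//|m IH] Lm; rewrite addSn /=.
have [mL|Lm'] := leqP m L.
  have -> : m = L by lia.
  right; exists (qa_U A (z L)); first exact: qa_U_unitary.
  split=> //; rewrite prepend_insert_after // asboolF; last first.
    by apply: shift_checkpoint_block; have := size_W_gt0; lia.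
  by rewrite (@drun_insert_block K) ?size_W_gt0 ?leqnn // take_size.
rewrite prepend_insert_after 1?ltnW // (asbool_equiv_eq (shift_checkpoint_after Lm')).
case: ifP => _; first by left.
have [->|[V VU [-> ->]]] := IH Lm'; first by left.
right; exists (qa_U A (z m) *m V); first by rewrite mul_unitarymx // qa_U_unitary.
by rewrite !mulmxA.
Qed.

Lemma prob_drun_insert (eps : R) i :
  0 <= eps -> nearly_id (matw A W) eps -> unit_vector psi ->
  prob psi (D (ns i)) - eps <= prob psi (D' (ns' i)).
Proof.
move=> eps_ge0 W_near psi_unit.
have prob_ge : forall x, prob psi x - eps <= prob psi x by move=> x; rewrite lerBlDr lerDl.
rewrite /ns'; case: ifP => nsL; first by rewrite drun_insert_before.
have Lns : (L < ns i)%N by rewrite ltnNge nsL.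
have [->|[V VU [-> ->]]] := drun_insert_after Lns; first exact: prob_ge.
rewrite !(prob_mulmxr V); apply: W_near.
  by apply: unit_vector_unitary; rewrite ?trmxC_unitary.
by rewrite /block_input; case: ifP => // _; exact: unit_vector_drun.
Qed.

End Insertion.

Lemma fD_insert {R : realType} {n : nat} {Sigma : finType} (A : qautomaton R n Sigma)
    (W : seq Sigma) (eps : R) :
  0 <= eps -> nearly_id (matw A W) eps ->
  forall u v, (fD A (prepend u v) - eps%:E <= fD A (prepend (u ++ W) v))%E.
Proof.
move=> eps_ge0 W_near u v.
have [->|W_neq0] := eqVneq W [::]; first by rewrite cats0 leeBlDr // leeDl // lee_fin.
rewrite leeBlDr //; apply: ge_ereal_sup => _ [psi [psi_F psi_unit] <-].
apply: ge_ereal_sup => _ [ns ns_incr <-]; rewrite -leeBlDr //.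
set ns' := shift_checkpoints u W ns.
apply: le_ereal_sup_tmp; eexists; first by exists psi.
apply: le_ereal_sup_tmp; eexists.
  by exists ns'; first exact: shift_checkpoints_incr.
apply: le_ereal_inf_tmp => _ [i _ <-].
apply: le_trans (leeB (ereal_inf_lbound _) (lexx _)) _; first by exists i.
by rewrite -EFinB lee_fin; exact: prob_drun_insert.
Qed.

Lemma sqr_sub2_le {R : realDomainType} (a b d : R) :
  0 <= a <= 1 -> 0 <= b -> 0 <= d -> a <= b + d -> a ^+ 2 - 2%:R * d <= b ^+ 2.
Proof.
move=> /andP[a_ge0 a_le1] b_ge0 d_ge0 a_le.
have : a * a <= a * (b + d) by rewrite ler_wpM2l.
have : a * d <= d by rewrite ler_piMl.
have := sqr_ge0 (a - b).
lra.
Qed.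

Section Spectral.
Context {R : realType} {n : nat}.
Local Notation C := R[i].
Local Notation vec := 'cV[C]_n.
Local Open Scope complex_scope.

Lemma unitary_normalmx (U : 'M[C]_n) : U \is unitarymx -> U \is normalmx.
Proof. by move=> UU; apply/normalmxP; rewrite (unitarymxP UU) unitary_trC_mul. Qed.

Lemma unitary_spectral (U : 'M[C]_n) : U \is unitarymx ->
  exists (P : 'M[C]_n) (d : 'rV[C]_n),
    [/\ P \is unitarymx, forall l, `|d 0 l| = 1 & U = P^t* *m diag_mx d *m P].
Proof.
move=> UU; have /orthomx_spectralP := unitary_normalmx UU.
set P := spectralmx U; set d := spectral_diag U.
have PU : P \is unitarymx by exact: spectral_unitarymx.
rewrite invmx_unitary // => UE; exists P, d; split=> // l.
have : diag_mx d \is unitarymx.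
  have -> : diag_mx d = P *m U *m P^t*.
    by rewrite UE !mulmxA (unitarymxP PU) mul1mx mulmxtVK.
  by rewrite !mul_unitarymx // trmxC_unitary.
move=> /unitarymxP; rewrite tr_diag_mx map_diag_mx mulmx_diag => /matrixP /(_ l l).
rewrite !mxE eqxx mulr1n -normCK => /eqP.
by rewrite sqrp_eq1 ?normr_ge0 // => /eqP.
Qed.

Lemma braket_sum (a b : vec) : braket a b = \sum_l (a l 0)^* * b l 0.
Proof. by rewrite /braket mxE; apply: eq_bigr => l _; rewrite !mxE. Qed.

Lemma sum_normM_le1 (a b : vec) : unit_vector a -> unit_vector b ->
  \sum_l `|a l 0| * `|b l 0| <= 1.
Proof.
rewrite /unit_vector !braket_sum => a_unit b_unit.
have amgm (x y : C) : 2%:R * (`|x| * `|y|) <= x^* * x + y^* * y.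
  rewrite -!normCKC; have xy_real : `|x| - `|y| \is Num.real by rewrite rpredB ?normr_real.
  have := exprn_ge0 2 (normr_ge0 (`|x| - `|y|)).
  by rewrite real_normK // sqrrB addrAC subr_ge0 mulr_natl.
rewrite -(ler_pM2l (ltr0n C 2)) mulr1 mulr_sumr.
apply: le_trans (ler_sum _ (fun l _ => amgm (a l 0) (b l 0))) _.
by rewrite big_split /= a_unit b_unit.
Qed.

Lemma norm_braket_diag (a b : vec) (e : 'rV[C]_n) (c : R) :
  unit_vector a -> unit_vector b -> 0 <= c -> (forall l, `|e 0 l| <= c%:C) ->
  `|braket a (diag_mx e *m b)| <= c%:C.
Proof.
move=> a_unit b_unit c_ge0 e_le; rewrite braket_sum.
apply: le_trans (ler_norm_sum _ _ _) _.
apply: le_trans (_ : \sum_l c%:C * (`|a l 0| * `|b l 0|) <= _).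
  apply: ler_sum => l _; rewrite mul_diag_mx mxE !normrM norm_conjC mulrCA.
  by rewrite ler_wpM2r ?mulr_ge0 ?normr_ge0.
by rewrite -mulr_sumr -[X in _ <= X]mulr1 ler_wpM2l ?ler0c ?sum_normM_le1.
Qed.

Lemma prob_ge_of_braket (a y y' : vec) (d : R) :
  `|braket a y| <= 1 -> `|braket a y' - braket a y| <= d%:C ->
  prob a y - 2%:R * d <= prob a y'.
Proof.
rewrite /prob; set z := braket a y; set w := braket a y' => z_le1 wz_le.
have d_ge0 : 0 <= d by rewrite -lecR (le_trans (normr_ge0 _) wz_le).
have := ler_distD w z 0; rewrite !subr0 distrC addrC.
move: z_le1 wz_le; rewrite !normc_def -[1]/(1%:C) -rmorphD /= !lecR => z_le1 wz_le z_le.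
have sqrtK (x : C) : let s := complex.Re x ^+ 2 + complex.Im x ^+ 2 in s = Num.sqrt s ^+ 2.
  by rewrite /= sqr_sqrtr // addr_ge0 ?sqr_ge0.
rewrite (sqrtK z) (sqrtK w); apply: sqr_sub2_le; rewrite ?sqrtr_ge0 //.
by apply: le_trans z_le _; rewrite lerD2l.
Qed.

Lemma nearly_id_diag (P : 'M[C]_n) (e : 'rV[C]_n) (d : R) :
  P \is unitarymx -> 0 <= d -> (forall l, `|e 0 l - 1| <= d%:C) ->
  nearly_id (P^t* *m diag_mx e *m P) (2%:R * d).
Proof.
move=> PU d_ge0 e_near phi y phi_unit y_unit.
rewrite -!mulmxA prob_mulmxr trmxCK -(prob_unitary phi y PU).
set a := P *m phi; set b := P *m y.
have a_unit : unit_vector a by exact: unit_vector_unitary.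
have b_unit : unit_vector b by exact: unit_vector_unitary.
apply: prob_ge_of_braket.
  have := norm_braket_diag (e := const_mx 1) a_unit b_unit ler01.
  by rewrite diag_const_mx mul1mx; apply=> l; rewrite mxE normr1.
have -> : braket a (diag_mx e *m b) - braket a b = braket a (diag_mx (e - const_mx 1) *m b).
  rewrite !braket_sum -sumrB; apply: eq_bigr => l _.
  by rewrite !mul_diag_mx !mxE mulrBl mul1r mulrBr.
by apply: norm_braket_diag => // l; rewrite !mxE.
Qed.

End Spectral.

Lemma octant_dist {R : realFieldType} (a1 b1 a2 b2 : R) :
  0 <= a1 <= b1 -> 0 <= a2 <= b2 -> a1 ^+ 2 + b1 ^+ 2 = 1 -> a2 ^+ 2 + b2 ^+ 2 = 1 ->
  `|b1 - b2| <= `|a1 - a2|.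
Proof.
move=> /andP[a1_ge0 ab1] /andP[a2_ge0 ab2] unit1 unit2.
have b_gt0 : 0 < b1 + b2 by nra.
have : (b1 - b2) * (b1 + b2) = (a2 - a1) * (a2 + a1) by nra.
move=> /(congr1 Num.norm); rewrite !normrM (gtr0_norm b_gt0).
rewrite (ger0_norm (addr_ge0 a2_ge0 a1_ge0)) (distrC a2) (addrC a2) => E.
rewrite -(ler_pM2r b_gt0) E.
by rewrite ler_wpM2l ?normr_ge0 ?lerD.
Qed.

Lemma truncn_dist {R : archiRealFieldType} (M : nat) (t1 t2 : R) :
  (0 < M)%N -> 0 <= t1 -> 0 <= t2 ->
  Num.truncn (M%:R * t1) = Num.truncn (M%:R * t2) -> `|t1 - t2| <= M%:R^-1.
Proof.
move=> M_gt0 t1_ge0 t2_ge0 E.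
have M_pos : (0 : R) < M%:R by rewrite ltr0n.
have /andP[l1 u1] := truncn_itv (mulr_ge0 (ltW M_pos) t1_ge0).
have /andP[l2 u2] := truncn_itv (mulr_ge0 (ltW M_pos) t2_ge0).
rewrite E -natr1 in l1 u1; rewrite -natr1 in u2.
have : `|M%:R * t1 - M%:R * t2| <= 1 by rewrite ler_norml; apply/andP; split; lra.
rewrite -mulrBr normrM (gtr0_norm M_pos) => dist_le1.
by rewrite -(ler_pM2l M_pos) mulfV ?gt_eqF.
Qed.

Lemma same_sign_dist {R : realDomainType} (x1 x2 : R) :
  (0 <= x1) = (0 <= x2) -> `|x1 - x2| = `| `|x1| - `|x2| |.
Proof.
case: (lerP 0 x1) => h1; case: (lerP 0 x2) => h2 // _.
  by rewrite (ger0_norm h1) (ger0_norm h2).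
by rewrite (ltr0_norm h1) (ltr0_norm h2) -opprD normrN.
Qed.

Lemma unit_circle_norm_le1 {R : realDomainType} (x y : R) :
  x ^+ 2 + y ^+ 2 = 1 -> `|x| <= 1.
Proof.
move=> xy1; rewrite -(ler_pXn2r (n := 2)) ?nnegrE ?normr_ge0 //.
by rewrite expr1n real_normK ?num_real; nra.
Qed.

Lemma octant_cell_dist {R : archiRealFieldType} (M : nat) (a1 b1 a2 b2 : R) :
  (0 < M)%N -> 0 <= a1 <= b1 -> 0 <= a2 <= b2 ->
  a1 ^+ 2 + b1 ^+ 2 = 1 -> a2 ^+ 2 + b2 ^+ 2 = 1 ->
  Num.truncn (M%:R * a1) = Num.truncn (M%:R * a2) ->
  `|a1 - a2| <= M%:R^-1 /\ `|b1 - b2| <= M%:R^-1.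
Proof.
move=> M_gt0 ab1 ab2 unit1 unit2 trunc_eq.
have a_near := truncn_dist M_gt0 (andP ab1).1 (andP ab2).1 trunc_eq.
by split=> //; apply: le_trans (octant_dist ab1 ab2 unit1 unit2) a_near.
Qed.

Section UnitCircle.
Context {R : realType}.
Local Open Scope complex_scope.

(* The octant of [z] and its smaller coordinate rounded down to a multiple of
   [1/M]; within an octant of the unit circle the larger coordinate varies less
   than the smaller one ([octant_dist]), so each cell has diameter [<= 2/M]. *)
Definition arc_cell (M : nat) (z : R[i]) : bool * bool * bool * 'I_M.+1 :=
  let: x +i* y := z in
  (0 <= x, 0 <= y, `|x| <= `|y|, inord (Num.truncn (M%:R * Num.min `|x| `|y|))).

Lemma truncn_le_unit (M : nat) (t : R) : 0 <= t <= 1 -> (Num.truncn (M%:R * t) <= M)%N.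
Proof.
move=> /andP[t_ge0 t_le1]; rewrite truncn_le_nat -natr1.
have : M%:R * t <= M%:R by rewrite -[X in _ <= X]mulr1 ler_wpM2l.
lra.
Qed.

Lemma unit_complex (x y : R) : `|x +i* y| = 1 -> x ^+ 2 + y ^+ 2 = 1.
Proof. by move=> xy1; have := add_Re2_Im2 (x +i* y); rewrite xy1 expr1n => -[]. Qed.

Lemma arc_cell_coord_dist (M : nat) (x1 y1 x2 y2 : R) : (0 < M)%N ->
  x1 ^+ 2 + y1 ^+ 2 = 1 -> x2 ^+ 2 + y2 ^+ 2 = 1 ->
  arc_cell M (x1 +i* y1) = arc_cell M (x2 +i* y2) ->
  `|x1 - x2| <= M%:R^-1 /\ `|y1 - y2| <= M%:R^-1.
Proof.
move=> M_gt0 unit1 unit2 [sx sy sxy].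
rewrite (same_sign_dist sx) (same_sign_dist sy).
have norm_unit (x y : R) : x ^+ 2 + y ^+ 2 = 1 -> `|x| ^+ 2 + `|y| ^+ 2 = 1.
  by rewrite !real_normK ?num_real.
have norm_le1 (x y : R) : x ^+ 2 + y ^+ 2 = 1 -> 0 <= `|x| <= 1.
  by move=> /unit_circle_norm_le1 ->; rewrite normr_ge0.
have min_le1 (x y : R) : x ^+ 2 + y ^+ 2 = 1 -> 0 <= Num.min `|x| `|y| <= 1.
  by move=> xy1; rewrite ge_min (andP (norm_le1 _ _ xy1)).2 le_min !normr_ge0.
move=> /(congr1 val) /=; rewrite !inordK ?ltnS ?truncn_le_unit ?min_le1 //.
have [xy2|yx2] := leP `|x2| `|y2|; move: sxy.
  rewrite xy2 => xy1; rewrite min_l ?xy1 // => trunc_eq.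
  by apply: octant_cell_dist; rewrite ?normr_ge0 ?xy1 ?xy2 ?norm_unit.
rewrite [X in _ = X]leNgt yx2 => /negbT; rewrite -ltNge => yx1.
rewrite (min_r (ltW yx1)) => trunc_eq; apply/and_comm.
by apply: octant_cell_dist; rewrite ?normr_ge0 ?(ltW yx1) ?(ltW yx2) // addrC norm_unit.
Qed.

Lemma arc_cell_dist (M : nat) (z1 z2 : R[i]) :
  (0 < M)%N -> `|z1| = 1 -> `|z2| = 1 -> arc_cell M z1 = arc_cell M z2 ->
  `|z1 - z2| <= (2%:R / M%:R)%:C.
Proof.
case: z1 z2 => [x1 y1] [x2 y2] M_gt0 /unit_complex unit1 /unit_complex unit2 cell_eq.
have [dx dy] := arc_cell_coord_dist M_gt0 unit1 unit2 cell_eq.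
rewrite normc_def /= lecR -(@ger0_norm _ (2%:R / M%:R)) ?divr_ge0 ?ler0n // -sqrtr_sqr.
apply: ler_wsqrtr.
rewrite -(real_normK (num_real (x1 - x2))) -(real_normK (num_real (y1 - y2))).
have := normr_ge0 (x1 - x2); have := normr_ge0 (y1 - y2).
rewrite mulr_natl mulr2n; nra.
Qed.

Lemma unimodular_pow_near1 (n M : nat) (d : 'rV[R[i]]_n) :
  (0 < M)%N -> (forall l, `|d 0 l| = 1) ->
  exists k, [/\ (0 < k)%N, (k <= (8 * M.+1) ^ n)%N &
                forall l, `|d 0 l ^+ k - 1| <= (2%:R / M%:R)%:C].
Proof.
move=> M_gt0 d_unit.
pose cells := {ffun 'I_n -> bool * bool * bool * 'I_M.+1}.
have card_cells : #|{: cells}| = ((8 * M.+1) ^ n)%N.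
  by rewrite card_ffun !card_prod card_bool !card_ord.
pose f (m : 'I_#|{: cells}|.+1) : cells := [ffun l => arc_cell M (d 0 l ^+ m)].
have /injectivePn [i [j ij fij]] : ~~ injectiveb f.
  by apply/injectiveP => /leq_card; rewrite card_ord ltnn.
wlog lt_ij : i j ij fij / (i < j)%N.
  move=> wlog_ij; have [lt|gt|/val_inj eq] := ltngtP i j.
  - exact: wlog_ij lt.
  - by apply: (wlog_ij j i); rewrite 1?eq_sym.
  - by rewrite eq eqxx in ij.
exists (j - i)%N; split.
- by rewrite subn_gt0.
- by rewrite -card_cells; have := ltn_ord j; lia.
move=> l; have := congr1 (fun g : cells => g l) fij; rewrite !ffunE => cell_eq.
have pow_unit m : `|d 0 l ^+ m| = 1 by rewrite normrX d_unit expr1n.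
have := arc_cell_dist M_gt0 (pow_unit j) (pow_unit i) (esym cell_eq).
rewrite -(subnKC (ltnW lt_ij)) exprD -{2}(mulr1 (d 0 l ^+ i)) -mulrBr normrM.
by rewrite pow_unit mul1r addKn.
Qed.

End UnitCircle.

Lemma div_truncnS_le {R : archiRealFieldType} (a eps : R) :
  0 < eps -> 0 <= a -> a / (Num.truncn (a / eps)).+1%:R <= eps.
Proof.
move=> eps_gt0 a_ge0; have := truncnS_gt (a / eps).
rewrite ltr_pdivrMr // => a_lt; rewrite ler_pdivrMr ?ltr0n //.
by rewrite mulrC ltW.
Qed.

Lemma truncn_div_bound {R : archiRealFieldType} (eps : R) :
  0 < eps -> eps <= 1 -> (8 * (Num.truncn (4%:R / eps)).+2)%:R <= 48%:R / eps.
Proof.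
move=> eps_gt0 eps_le1; set t := Num.truncn _.
have t_le : t%:R <= 4%:R / eps by rewrite truncn_le divr_ge0 ?ler0n ?ltW.
have inv_ge1 : 1 <= eps^-1 by rewrite invf_ge1.
rewrite natrM -(addn2 t) natrD; lra.
Qed.

Section Pumping.
Context {R : realType} {n : nat} {Sigma : finType} (A : qautomaton R n Sigma).

Lemma matw_wpow_spectral (w : seq Sigma) (P : 'M[R[i]]_n) (d : 'rV[R[i]]_n) k :
  P \is unitarymx -> matw A w = P^t* *m diag_mx d *m P ->
  matw A (wpow w k) = P^t* *m diag_mx (\row_l d 0 l ^+ k) *m P.
Proof.
move=> PU wE; elim: k => [|k IH].
  have -> : \row_l d 0 l ^+ 0 = const_mx 1 by apply/matrixP => ? ?; rewrite !mxE.
  by rewrite diag_const_mx mulmx1 unitary_trC_mul.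
change (wpow w k.+1) with (w ++ wpow w k).
rewrite matw_cat IH wE !mulmxA (mulmxtVK _ PU) -[in LHS](mulmxA (P^t*)) mulmx_diag.
by congr (_ *m diag_mx _ *m _); apply/matrixP => ? ?; rewrite !mxE exprSr.
Qed.

Lemma fD_insert_power (w : seq Sigma) (M : nat) : (0 < M)%N ->
  exists k, [/\ (0 < k)%N, (k <= (8 * M.+1) ^ n)%N &
    forall u v,
      (fD A (prepend u v) - (4%:R / M%:R)%:E <= fD A (prepend (u ++ wpow w k) v))%E].
Proof.
move=> M_gt0.
have [P [d [PU d_unit wE]]] := unitary_spectral (matw_unitary A w).
have [k [k_gt0 k_le d_near]] := unimodular_pow_near1 M_gt0 d_unit.
have near_ge0 : 0 <= 2%:R / M%:R :> R by rewrite divr_ge0 ?ler0n.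
exists k; split=> // u v; apply: fD_insert; first by rewrite divr_ge0 ?ler0n.
rewrite (matw_wpow_spectral k PU wE) (_ : 4%:R / M%:R = 2%:R * (2%:R / M%:R)).
  by apply: nearly_id_diag => // l; rewrite mxE.
by rewrite mulrA -natrM.
Qed.

End Pumping.

Theorem theorem3 (R : realType) (n : nat) (Sigma : finType)
    (A : qautomaton R n Sigma) :
  (forall (w : seq Sigma), w != [::] -> forall eps : R, 0 < eps ->
     exists k : nat, (0 < k)%N /\
       forall (u : seq Sigma) (v : nat -> Sigma),
         (fD A (prepend (u ++ wpow w k) v) >= fD A (prepend u v) - eps%:E)%E)
  /\
  (exists c : R, 0 < c /\
     forall (w : seq Sigma), w != [::] -> forall eps : R, 0 < eps -> eps <= 1 ->
       exists k : nat, (0 < k)%N /\ k%:R <= (c * eps) ^- n /\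
         forall (u : seq Sigma) (v : nat -> Sigma),
           (fD A (prepend (u ++ wpow w k) v) >= fD A (prepend u v) - eps%:E)%E).
Proof.
have pumping (w : seq Sigma) (eps : R) : 0 < eps -> exists k,
    [/\ (0 < k)%N, (k <= (8 * (Num.truncn (4%:R / eps)).+2) ^ n)%N &
     forall u v, (fD A (prepend u v) - eps%:E <= fD A (prepend (u ++ wpow w k) v))%E].
  move=> eps_gt0.
  have [k [k_gt0 k_le k_pumps]] := fD_insert_power A w (ltn0Sn (Num.truncn (4%:R / eps))).
  exists k; split=> // u v; apply: le_trans (k_pumps u v).
  by rewrite leeB // lee_fin div_truncnS_le ?ler0n.
split=> [w _ eps eps_gt0|].
  by have [k [k_gt0 _ k_pumps]] := pumping w eps eps_gt0; exists k.
exists 48%:R^-1; split=> [|w _ eps eps_gt0 eps_le1]; first by rewrite invr_gt0 ltr0n.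
have [k [k_gt0 k_le k_pumps]] := pumping w eps eps_gt0; exists k; do !split=> //.
rewrite -exprVn invfM invrK; move: k_le; rewrite -(ler_nat R) natrX => /le_trans; apply.
apply: lerXn2r; rewrite ?nnegrE ?ler0n ?truncn_div_bound //.
by rewrite divr_ge0 ?ler0n ?ltW.
Qed.
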